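(* Let $\mathcal{G}$ be the complete digraph on $n$ nodes (all ordered pairs $(i,j)$, including $i=j$, are edges), and let $\tau\in\mathbb{Z}_{>0}$ with $\tau\le n$ and $\tau$ dividing $n$. Let $\Pi_0\in\mathbb{R}^{\tau\times\tau}$ be any irreducible permutation matrix, and set $P^*=\Pi_0\otimes \frac{\tau}{n}\mathbb{1}_{n/\tau}\mathbb{1}_{n/\tau}^\top$. Then $P^*$ is an optimal solution of the problem of maximizing $\min_{i,j}\mathbb{P}(T_{ij}(P)\le\tau)$ over all row-stochastic $P\in\mathbb{R}^{n\times n}$ with nonnegative entries, and $\min_{i,j}\mathbb{P}(T_{ij}(P^* )\le\tau)=\frac{\tau}{n}$.
   Context: For a Markov chain $(X_k)_{k\ge0}$ with transition matrix $P$, $T_{ij}=\min\{k\ge1: X_k=j\}$ given $X_0=i$. $\otimes$ denotes the Kronecker product and $\mathbb{1}_m$ the all-ones column vector in $\mathbb{R}^m$. *)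

From mathcomp Require Import all_boot all_order all_algebra all_fingroup.
From mathcomp Require Export mxtens.
Set Implicit Arguments. Unset Strict Implicit. Unset Printing Implicit Defensive.
Import Order.TTheory GRing.Theory Num.Theory.
Local Open Scope ring_scope.

Definition row_stochastic (R : realFieldType) n (P : 'M[R]_n) : Prop :=
  (forall i j, 0 <= P i j) /\ (forall i, \sum_(j < n) P i j = 1).

(* first-passage probabilities: fpass P k i j = P(T_ij = k) for k >= 1,
   T_ij = min{k >= 1 : X_k = j} given X_0 = i (first-step analysis):
   P(T_ij = 1) = P_ij, P(T_ij = k+1) = sum_{l <> j} P_il P(T_lj = k). *)
Fixpoint fpass (R : realFieldType) n (P : 'M[R]_n) (k : nat) (i j : 'I_n) : R :=
  match k with
  | 0 => 0
  | 1 => P i j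
  | k'.+1 => \sum_(l < n | l != j) P i l * fpass P k' l j
  end.

Definition hit_le (R : realFieldType) n (P : 'M[R]_n) (t : nat) (i j : 'I_n) : R :=
  \sum_(1 <= k < t.+1) fpass P k i j.

(* min_{i,j} P(T_ij <= t).  All these values lie in [0,1] for a stochastic P,
   so using 1 as the neutral element of min gives exactly the minimum
   (the index set is nonempty). *)
Definition min_hit (R : realFieldType) n (P : 'M[R]_n) (t : nat) : R :=
  \big[Num.min/1]_(i < n) \big[Num.min/1]_(j < n) hit_le P t i j.

Definition irreducible_mx (R : realFieldType) n (A : 'M[R]_n) : Prop :=
  forall i j : 'I_n, exists k : nat, 0 < (A ^+ k) i j.

Definition is_perm_matrix (R : realFieldType) n (A : 'M[R]_n) : Prop :=
  exists s : 'S_n, A = perm_mx s.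

Definition Pstar (R : realFieldType) (tau m : nat) (Pi0 : 'M[R]_tau) : 'M[R]_(tau * m) :=
  tensmx Pi0 ((tau%:R / (tau * m)%:R) *: ((const_mx 1 : 'cV[R]_m) *m (const_mx 1 : 'cV[R]_m)^T)).

From mathcomp Require Import all_boot all_order all_algebra all_fingroup.
From mathcomp Require Import mxtens.
From mathcomp Require Import reals.
Import Order.TTheory GRing.Theory Num.Theory.
Set Implicit Arguments.
Unset Strict Implicit.
Unset Printing Implicit Defensive.
Local Open Scope ring_scope.

(* First-step analysis gives P(T_ij <= t+1) <= P_ij + sum_l P_il P(T_lj <= t).
   Summing over j, the expected number of distinct states visited during steps
   1..t is at most t, so for every i some j has P(T_ij <= t) <= t/n.
   Under P*, the block of the chain follows the single tau-cycle of Pi0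
   deterministically while the position inside the block is uniform.  Within
   tau steps the chain therefore enters the block of j exactly once, and lands
   on j with probability 1/m = tau/n, whatever i and j are. *)

Section FirstPassage.
Variables (R : realFieldType) (n : nat) (P : 'M[R]_n).

Lemma fpassSS k i j :
  fpass P k.+2 i j = \sum_(l < n | l != j) P i l * fpass P k.+1 l j.
Proof. by []. Qed.

Lemma hit_leE t i j : hit_le P t i j = \sum_(0 <= k < t) fpass P k.+1 i j.
Proof. exact: big_add1. Qed.

Hypothesis P_stoch : row_stochastic P.
Let P_ge0 : forall i j, 0 <= P i j := proj1 P_stoch.
Let P_sum1 : forall i, \sum_j P i j = 1 := proj2 P_stoch.

Lemma fpass_ge0 k i j : 0 <= fpass P k i j.
Proof.
elim: k i j => [//|[|k] IHk] i j; first exact: P_ge0.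
by rewrite fpassSS; apply: sumr_ge0 => l _; apply: mulr_ge0.
Qed.

Lemma hit_leS t i j :
  hit_le P t.+1 i j <= P i j + \sum_l P i l * hit_le P t l j.
Proof.
rewrite hit_leE big_nat_recl // lerD2l.
under [leRHS]eq_bigr do rewrite hit_leE big_distrr.
rewrite [leRHS]exchange_big; apply: ler_sum => k _.
rewrite fpassSS [leRHS](bigD1 j) // lerDr.
by apply: mulr_ge0; [exact: P_ge0 | exact: fpass_ge0].
Qed.

Lemma sum_hit_le t i : \sum_j hit_le P t i j <= t%:R.
Proof.
elim: t i => [|t IHt] i.
  by rewrite big1 // => j _; rewrite hit_leE big_geq.
apply: le_trans (ler_sum _ (fun j _ => hit_leS t i j)) _.
rewrite big_split /= P_sum1 exchange_big /= -natr1 addrC lerD2r.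
under eq_bigr do rewrite -big_distrr /=.
apply: le_trans (_ : \sum_l P i l * t%:R <= _).
  by apply: ler_sum => l _; apply: ler_wpM2l.
by rewrite -big_distrl /= P_sum1 mul1r.
Qed.

Lemma min_hit_le t : (0 < n)%N -> min_hit P t <= t%:R / n%:R.
Proof.
move=> n_gt0; pose i0 := Ordinal n_gt0.
rewrite ler_pdivlMr ?ltr0n //.
have -> : min_hit P t * n%:R = \sum_(j < n) min_hit P t.
  by rewrite sumr_const card_ord mulr_natr.
apply: le_trans (sum_hit_le t i0); apply: ler_sum => j _.
exact: le_trans (bigmin_le _ i0 _) (bigmin_le _ j _).
Qed.

End FirstPassage.

Section FirstVisit.
Variables (T : eqType) (f : T -> T).

(* The f-orbit of [a] meets [b] for the first time after [k.+1] steps. *)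
Fixpoint first_visit (k : nat) (a b : T) : bool :=
  if k is k'.+1 then (f a != b) && first_visit k' (f a) b else f a == b.

Lemma first_visit_iter k a b : first_visit k a b -> iter k.+1 f a = b.
Proof.
elim: k a => [|k IHk] a /=; first by move/eqP.
by case/andP=> _ /IHk <-; rewrite -iterSr.
Qed.

Lemma sum_first_visit (R : pzSemiRingType) t a b :
  \sum_(0 <= k < t) (first_visit k a b)%:R =
  (has (fun k => iter k.+1 f a == b) (iota 0 t))%:R :> R.
Proof.
elim: t a => [|t IHt] a; first by rewrite big_geq.
rewrite big_nat_recl //= -[iota 1 t]/(iota (1 + 0) t) iotaDl has_map.
case: eqP => [fa_b | fa_nb] /=.
  by rewrite big1 ?addr0 // => k _ /=; rewrite fa_b eqxx.
rewrite add0r IHt; congr (_ %:R); congr nat_of_bool.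
by apply: eq_has => k /=; rewrite add0n -iterSr.
Qed.

End FirstVisit.

Lemma first_visit_cycle (T : finType) (f : T -> T) k b :
  (k.+1 < fingraph.order f b)%N -> first_visit f k b b = false.
Proof.
move=> k_lt; apply/negP => /first_visit_iter ret_b.
by have := findex_iter k_lt; rewrite ret_b findex0.
Qed.

Lemma order_fconnect_all (T : finType) (f : T -> T) a :
  (forall b, fconnect f a b) -> fingraph.order f a = #|T|.
Proof. by move=> fa_all; apply: eq_card => b; rewrite !inE fa_all. Qed.

Lemma perm_mxE (R : pzSemiRingType) n (s : 'S_n) a b :
  perm_mx s a b = (s a == b)%:R :> R.
Proof. by rewrite !mxE. Qed.

Lemma perm_mxX (R : pzSemiRingType) n (s : 'S_n) k :
  perm_mx s ^+ k = perm_mx (s ^+ k)%g :> 'M[R]_n.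
Proof.
elim: k => [|k IHk]; first by rewrite !expr0 perm_mx1.
by rewrite exprS expgS IHk perm_mxM mulmxE.
Qed.

Lemma irreducible_perm_mx_fconnect (R : realFieldType) n (s : 'S_n) :
  irreducible_mx (perm_mx s : 'M[R]_n) -> forall a b, fconnect s a b.
Proof.
move=> s_irr a b; have [k] := s_irr a b.
rewrite perm_mxX perm_mxE permX; case: eqP => [<- _|]; last by rewrite ltxx.
exact: fconnect_iter.
Qed.

Section Pstar.
Variables (R : realFieldType) (tau m : nat) (s : 'S_tau).

Definition block (x : 'I_(tau * m)) : 'I_tau := (mxtens_unindex x).1.

Local Notation Ps := (Pstar m (perm_mx s : 'M[R]_tau)).

Lemma PstarE x y :
  Ps x y = (s (block x) == block y)%:R * (tau%:R / (tau * m)%:R).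
Proof. by rewrite /Pstar /tensmx !mxE big_ord1 !mxE !mulr1. Qed.

Lemma sum_block (G : 'I_tau -> R) :
  \sum_(y < tau * m) G (block y) = \sum_(c < tau) G c *+ m.
Proof.
rewrite (reindex (@mxtens_index tau m)) /=; last first.
  by exists (@mxtens_unindex tau m) => z _;
    [exact: mxtens_indexK | exact: mxtens_unindexK].
under eq_bigr do rewrite /block mxtens_indexK.
rewrite -(pair_big xpredT xpredT (fun c _ => G c)) /=.
by apply: eq_bigr => c _; rewrite sumr_const card_ord.
Qed.

Hypotheses (tau_gt0 : (0 < tau)%N) (m_gt0 : (0 < m)%N).

Lemma Pstar_weight : tau%:R / (tau * m)%:R = m%:R^-1 :> R.
Proof.
by rewrite natrM invfM mulrA divff ?mul1r // pnatr_eq0 -lt0n.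
Qed.

Lemma Pstar_stochastic : row_stochastic Ps.
Proof.
split=> [x y | x]; first by rewrite PstarE Pstar_weight mulr_ge0 ?invr_ge0.
under eq_bigr do rewrite PstarE.
rewrite (sum_block (fun c => (s (block x) == c)%:R * _)) (bigD1 (s (block x))) //=.
rewrite big1 => [|c /negbTE]; last by rewrite eq_sym => ->; rewrite mul0r mul0rn.
by rewrite Pstar_weight eqxx mul1r addr0 -[_ *+ m]mulr_natr mulVf // pnatr_eq0 -lt0n.
Qed.

Hypothesis s_transitive : forall a b, fconnect s a b.

Lemma fpass_Pstar k x y : (k < tau)%N ->
  fpass Ps k.+1 x y = (first_visit s k (block x) (block y))%:R / m%:R.
Proof.
elim: k x y => [|k IHk] x y k_lt; first by rewrite /= PstarE Pstar_weight.
rewrite fpassSS; under eq_bigr => l _ do rewrite IHk 1?ltnW //.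
have next_block l :
    Ps x l * ((first_visit s k (block l) (block y))%:R / m%:R) =
    Ps x l * ((first_visit s k (s (block x)) (block y))%:R / m%:R).
  by rewrite PstarE; case: eqP => [-> // | _]; rewrite !mul0r.
under eq_bigr do rewrite next_block.
rewrite -big_distrl /=; case: (eqVneq (s (block x)) (block y)) => [-> | sx_ny] /=.
  rewrite first_visit_cycle ?order_fconnect_all ?card_ord //.
  by rewrite !mul0r mulr0.
have [_ /(_ x)] := Pstar_stochastic.
by rewrite (bigD1 y) //= PstarE (negbTE sx_ny) mul0r add0r => ->; rewrite mul1r.
Qed.

Lemma hit_le_Pstar x y : hit_le Ps tau x y = m%:R^-1.
Proof.
rewrite hit_leE; under eq_big_nat => k /andP[_ k_lt] do rewrite fpass_Pstar //.
rewrite -big_distrl /= sum_first_visit.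
suff -> : has (fun k => iter k.+1 s (block x) == block y) (iota 0 tau).
  by rewrite mul1r.
have sx_y := s_transitive (s (block x)) (block y).
apply/hasP; exists (findex s (s (block x)) (block y)).
  by rewrite mem_iota add0n /=; have := findex_max sx_y; rewrite order_fconnect_all ?card_ord.
by rewrite iterSr iter_findex.
Qed.

Lemma min_hit_Pstar : min_hit Ps tau = tau%:R / (tau * m)%:R.
Proof.
have n_gt0 : (0 < tau * m)%N by rewrite muln_gt0 tau_gt0.
apply/le_anti/andP; split; first exact: min_hit_le Pstar_stochastic tau n_gt0.
rewrite Pstar_weight.
have inv_m_le1 : m%:R^-1 <= 1 :> R by rewrite invf_le1 ?ltr0n ?ler1n.
apply: le_bigmin => // x _; apply: le_bigmin => // y _.
by rewrite hit_le_Pstar.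
Qed.

End Pstar.

Theorem lemma1 (R : realType) (tau m : nat) (Pi0 : 'M[R]_tau) :
  (0 < tau)%N -> (0 < m)%N ->
  is_perm_matrix Pi0 -> irreducible_mx Pi0 ->
  (forall P : 'M[R]_(tau * m), row_stochastic P ->
     min_hit P tau <= min_hit (Pstar m Pi0) tau) /\
  min_hit (Pstar m Pi0) tau = tau%:R / (tau * m)%:R.
Proof.
move=> tau_gt0 m_gt0 [s ->] /irreducible_perm_mx_fconnect s_transitive.
rewrite min_hit_Pstar //; split=> // P P_stoch.
by apply: min_hit_le; rewrite // muln_gt0 tau_gt0.
Qed.
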